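(* Let $w\in\Sigma^*$ and let $u$ be a scattered factor of $w$ with $|u|\le\iota(w)$. Then $|E(w,u)|\ge\binom{\iota(w)}{|u|}$.
   Context: The alphabet $\Sigma$ is assumed to be exactly the set of letters occurring in $w$. A word $u$ is a scattered factor of $w$ if $w=v_1u[1]v_2\cdots v_{|u|}u[|u|]v_{|u|+1}$ for some words $v_i$. An embedding of $u$ in $w$ is a map $e:\{1,\dots,|u|\}\to\{1,\dots,|w|\}$ with $e(1)<\dots<e(|u|)$ and $u[i]=w[e(i)]$ for all $i$; $E(w,u)$ is the set of all embeddings of $u$ in $w$. The universality index $\iota(w)$ is the largest $k\in\mathbb{N}_0$ such that every word in $\Sigma^k$ is a scattered factor of $w$. *)

From mathcomp Require Import all_boot.
Set Implicit Arguments. Unset Strict Implicit. Unset Printing Implicit Defensive.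

Section Words.
Variable T : eqType.

Definition scattered_factor (u w : seq T) : bool := subseq u w.

Definition embeddings (w u : seq T) : {set {ffun 'I_(size u) -> 'I_(size w)}} :=
  [set e : {ffun 'I_(size u) -> 'I_(size w)} |
     [forall i : 'I_(size u), forall j : 'I_(size u), (i < j) ==> (e i < e j)]
     && [forall i : 'I_(size u), tnth (in_tuple u) i == tnth (in_tuple w) (e i)]].

Definition k_universal (w : seq T) (k : nat) : Prop :=
  forall v : seq T, size v = k -> all (fun a => a \in w) v -> scattered_factor v w.

Definition is_universality_index (w : seq T) (k : nat) : Prop :=
  k_universal w k /\ forall k', k_universal w k' -> k' <= k.

End Words.

From mathcomp Require Import all_boot.
Set Implicit Arguments. Unset Strict Implicit. Unset Printing Implicit Defensive.

(* Cut a (k+1)-universal word w as w = p s right after the first occurrence of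
   the letter of the alphabet that appears last.  Then p contains every letter
   and s is k-universal: a v embeds in w for each v of length k, where a is that
   last letter, and a does not occur earlier.  An embedding of x u in p s either
   sends x into p and u into s, or lies entirely in s, so
   |E(p s, x u)| >= |E(s, u)| + |E(s, x u)|, and Pascal's rule
   C(k+1, n+1) = C(k, n) + C(k, n+1) closes an induction on k. *)

Section Factorization.
Variable T : eqType.
Implicit Types (A p s v w : seq T) (a b : T).

Definition universal_over A w k :=
  forall v, size v = k -> all [in A] v -> subseq v w.

Lemma subseq_cons_cat_notin a v p s :
  a \notin p -> subseq (a :: v) (p ++ s) = subseq (a :: v) s.
Proof.
elim: p => //= b p IHp; rewrite inE negb_or => /andP[/negbTE ab /IHp].
by rewrite ab.
Qed.

Lemma split_at_last_new_letter A w : A != [::] -> {subset A <= w} ->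
  exists p a s,
    [/\ w = p ++ a :: s, a \in A, a \notin p & {subset A <= a :: p}].
Proof.
elim: w A => [|b w IHw] A nzA sAw.
  by case: (A) nzA sAw => // c ? _ /(_ c (mem_head _ _)).
pose A' := filter (predC1 b) A.
have memA' d : d \in A -> d != b -> d \in A'.
  by move=> dA db; rewrite mem_filter /= db.
have [A'0 | nzA'] := eqVneq A' [::].
  have sAb d : d \in A -> d = b.
    by move=> dA; apply/eqP/negPn/negP => /(memA' d dA); rewrite A'0.
  exists [::], b, w; split=> // [|d /sAb ->]; last exact: mem_head.
  by case: (A) nzA sAb => // c ? _ /(_ c (mem_head _ _)) <-; apply: mem_head.
have sA'w : {subset A' <= w}.
  move=> d; rewrite mem_filter => /andP[/= db /sAw].
  by rewrite inE (negbTE db).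
have [p [a [s [-> aA' ap sA'ap]]]] := IHw A' nzA' sA'w.
move: aA'; rewrite mem_filter => /andP[/= ab aA].
exists (b :: p), a, s; split=> //; first by rewrite inE negb_or ab.
move=> d dA; have [-> | db] := eqVneq d b; first by rewrite !inE eqxx orbT.
by have := sA'ap d (memA' d dA db); rewrite !inE => /orP[] ->; rewrite ?orbT.
Qed.

Lemma universal_over_factor A w k x : x \in A -> universal_over A w k.+1 ->
  exists p s, [/\ w = p ++ s, {subset A <= p} & universal_over A s k].
Proof.
move=> xA uw.
have sAw : {subset A <= w}.
  move=> b bA; apply: (mem_subseq (s1 := nseq k.+1 b)); last exact: mem_head.
  by apply: uw; rewrite ?size_nseq // all_nseq.
have nzA : A != [::] by case: (A) xA.
have [p [a [s [ws aA ap sAap]]]] := split_at_last_new_letter nzA sAw.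
rewrite {}ws in uw *.
exists (rcons p a), s; split=> [|b /sAap|v sv vA]; first by rewrite cat_rcons.
  by rewrite mem_rcons.
have := uw (a :: v); rewrite subseq_cons_cat_notin //= eqxx; apply.
  by rewrite sv.
by rewrite aA vA.
Qed.

End Factorization.

Section Embeddings.
Variable T : eqType.
Implicit Types (p s w u : seq T) (a b x : T).

(* An embedding of u in w, listed as the increasing sequence of its
   positions. *)
Fixpoint index_embeddings w u : seq (seq nat) :=
  match w, u with
  | _, [::] => [:: [::]]
  | [::], _ :: _ => [::]
  | a :: w', b :: u' =>
      (if a == b then map (cons 0 \o map S) (index_embeddings w' u') else [::])
      ++ map (map S) (index_embeddings w' u)
  end.

Lemma index_embeddings0 w : index_embeddings w [::] = [:: [::]].
Proof. by case: w. Qed.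

Lemma size_index_embeddings_catl p s u :
  size (index_embeddings s u) <= size (index_embeddings (p ++ s) u).
Proof.
elim: p => // a p IHp.
case: u IHp => [|b u] IHp; rewrite ?index_embeddings0 //=.
by rewrite size_cat size_map (leq_trans IHp) ?leq_addl.
Qed.

Lemma size_index_embeddings_cat_cons p s x u : x \in p ->
  size (index_embeddings s u) + size (index_embeddings s (x :: u))
    <= size (index_embeddings (p ++ s) (x :: u)).
Proof.
elim: p => // a p IHp; rewrite inE /= size_cat !size_map eq_sym.
have [-> _ | _ /= xp] := eqVneq x a.
  by rewrite size_map leq_add ?size_index_embeddings_catl.
exact: leq_trans (IHp xp) (leq_addl _ _).
Qed.

Lemma binomial_le_size_index_embeddings A w k u :
  universal_over A w k -> all [in A] u ->
  'C(k, size u) <= size (index_embeddings w u).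
Proof.
elim: k w u => [|k IHk] w [|x u] uw; rewrite ?index_embeddings0 ?bin0 //=.
case/andP=> xA uA.
have [p [s [-> sAp us]]] := universal_over_factor xA uw.
rewrite binS addnC.
apply: leq_trans (size_index_embeddings_cat_cons s u (sAp x xA)).
by apply: leq_add; apply: IHk => //=; apply/andP.
Qed.

Lemma mem_index_embeddings w u e : e \in index_embeddings w u ->
  [/\ sorted ltn e, all (gtn (size w)) e & forall a, map (nth a w) e = u].
Proof.
elim: w u e => [|b w IHw] [|c u] e //=; try by rewrite mem_seq1 => /eqP->.
rewrite mem_cat => /orP[]; last first.
  case/mapP=> e' /IHw[se' be' me'] ->; split=> [||a].
  - by rewrite sorted_map.
  - by rewrite all_map; apply: sub_all be' => i.
  - by rewrite -map_comp; apply: me'.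
case: eqP => [<-|//] /mapP[e' /IHw[se' be' me'] ->]; split=> [||a].
- rewrite /= path_sortedE ?sorted_map ?se' ?andbT; last exact: ltn_trans.
  by rewrite all_map; apply/allP.
- by rewrite /= all_map; apply: sub_all be' => i.
- by rewrite /= -map_comp -(me' a).
Qed.

Lemma size_mem_index_embeddings w u e :
  e \in index_embeddings w u -> size e = size u.
Proof.
case: w => [|a w] ee.
  by case: u ee => [|b u]; rewrite ?index_embeddings0 // mem_seq1 => /eqP->.
by case/mem_index_embeddings: ee => _ _ /(_ a) <-; rewrite size_map.
Qed.

Lemma index_embeddings_uniq w u : uniq (index_embeddings w u).
Proof.
elim: w u => [|a w IHw] [|b u] //=.
have inj_mapS : injective (map S) by apply: inj_map => i j [].
rewrite cat_uniq (map_inj_uniq inj_mapS) IHw andbT.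
case: eqP => _ /=; last by apply/hasPn.
rewrite map_inj_uniq ?IHw; last by move=> e e' [/inj_mapS].
by apply/hasPn => _ /mapP[e _ ->]; apply/mapP => -[e' _]; case: e.
Qed.

(* The letter a only makes the codomain nonempty, as inord requires. *)
Definition ffun_of_indices a w u (e : seq nat)
    : {ffun 'I_(size u) -> 'I_(size (a :: w))} :=
  [ffun i : 'I_(size u) => inord (nth 0 e i)].

Lemma ffun_of_indicesE a w u e i : e \in index_embeddings (a :: w) u ->
  ffun_of_indices a w u e i = nth 0 e i :> nat.
Proof.
move=> ee; have [_ /allP be _] := mem_index_embeddings ee.
rewrite ffunE inordK //; apply/be/mem_nth.
by rewrite (size_mem_index_embeddings ee).
Qed.

Lemma ffun_of_indices_embedding a w u e : e \in index_embeddings (a :: w) u ->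
  ffun_of_indices a w u e \in embeddings (a :: w) u.
Proof.
move=> ee; have [se _ me] := mem_index_embeddings ee.
have size_e := size_mem_index_embeddings ee.
rewrite inE; apply/andP; split; apply/forallP => i.
  apply/forallP => j; apply/implyP; rewrite !ffun_of_indicesE // => ltij.
  by apply: (sorted_ltn_nth ltn_trans) => //; rewrite inE size_e.
have nth_u k : k < size u -> nth a u k = nth a (a :: w) (nth 0 e k).
  by move=> ltk; rewrite -(me a) (nth_map 0) ?size_e.
by rewrite !(tnth_nth a) /= ffun_of_indicesE // nth_u.
Qed.

Lemma ffun_of_indices_inj a w u :
  {in index_embeddings (a :: w) u &, injective (ffun_of_indices a w u)}.
Proof.
move=> e e' ee ee' eq_ff; have size_e := size_mem_index_embeddings ee.
apply: (@eq_from_nth _ 0) => [|i].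
  by rewrite size_e (size_mem_index_embeddings ee').
rewrite size_e => lti.
move/ffunP/(_ (Ordinal lti))/(congr1 (@nat_of_ord _)): eq_ff.
by rewrite !ffun_of_indicesE.
Qed.

Lemma size_index_embeddings_le_card w u :
  size (index_embeddings w u) <= #|embeddings w u|.
Proof.
case: w => [|a w].
  case: u => //=; rewrite card_gt0; apply/set0Pn; exists (ffun0 (card_ord 0)).
  by rewrite inE; apply/andP; split; apply/forallP => -[].
rewrite -(size_map (ffun_of_indices a w u)) cardE; apply: uniq_leq_size.
  by rewrite (map_inj_in_uniq (ffun_of_indices_inj (u := u)))
    index_embeddings_uniq.
by move=> _ /mapP[e ee ->]; rewrite mem_enum ffun_of_indices_embedding.
Qed.

End Embeddings.

Theorem lemma22 (T : eqType) (w u : seq T) (iw : nat) :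
  is_universality_index w iw ->
  scattered_factor u w ->
  size u <= iw ->
  'C(iw, size u) <= #|embeddings w u|.
Proof.
move=> [univ_w _] uw _.
apply: leq_trans (size_index_embeddings_le_card w u).
apply: (binomial_le_size_index_embeddings (A := w)) => //.
by apply/allP => x /(mem_subseq uw).
Qed.
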